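(* Let $G$ act by isometries on a $\delta$-hyperbolic geodesic space $X$, let $\alpha\ge3\delta$ and let $U\subset G$ be $\alpha$-reduced at $p\in X$. Let $n\ge2$, let $w\equiv u_1\cdots u_n$ be a reduced word over $U\sqcup U^{-1}$, and set $x_0=p$, $x_i=u_1\cdots u_ip$ for $1\le i\le n$. Then: (i) $(x_{i-1},x_{i+1})_{x_i}+(x_i,x_{i+2})_{x_{i+1}}<|x_i-x_{i+1}|-2(\alpha+50\delta)$ for every $i\in\{1,\dots,n-2\}$; (ii) $|wp-p|\ge\frac12|u_1p-p|+\frac12|u_np-p|+2(n-1)(\alpha+40\delta)+4(n-1)\delta$; (iii) $(p,wp)_{x_i}\le(u_i^{-1}p,u_{i+1}p)_p+2\delta$ for every $i\in\{1,\dots,n-2\}$.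
   Context: Hyperbolicity: $(x,z)_t\ge\min\{(x,y)_t,(y,z)_t\}-\delta$ with Gromov product $(x,y)_z=\frac12(|x-z|+|y-z|-|x-y|)$. For $\alpha\ge3\delta$, a finite subset $U\subset G$ is $\alpha$-reduced at $p\in X$ if $U\cap U^{-1}=\varnothing$ and for every pair of distinct $u_1,u_2\in U\sqcup U^{-1}$, $(u_1p,u_2p)_p<\frac12\min\{|u_1p-p|,|u_2p-p|\}-\alpha-50\delta$. Words over $U\sqcup U^{-1}$ are evaluated in $G$. *)

From Stdlib Require Import Reals List.
Import ListNotations.
Open Scope R_scope.

Record Group := {
  gcar :> Type;
  gmul : gcar -> gcar -> gcar;
  gone : gcar;
  ginv : gcar -> gcar;
  gmul_assoc : forall a b c, gmul a (gmul b c) = gmul (gmul a b) c;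
  gmul_1l : forall a, gmul gone a = a;
  gmul_1r : forall a, gmul a gone = a;
  gmul_Vl : forall a, gmul (ginv a) a = gone;
  gmul_Vr : forall a, gmul a (ginv a) = gone
}.

Record MetricSpace := {
  mcar :> Type;
  mdist : mcar -> mcar -> R;
  dist_refl : forall x, mdist x x = 0;
  dist_sep : forall x y, mdist x y = 0 -> x = y;
  dist_sym : forall x y, mdist x y = mdist y x;
  dist_tri : forall x y z, mdist x z <= mdist x y + mdist y z
}.

Section Geom.
Variable X : MetricSpace.

Definition gromov (x y z : X) : R :=
  (mdist X x z + mdist X y z - mdist X x y) / 2.

Definition geodesic_space : Prop :=
  forall x y : X, exists g : R -> X,
    g 0 = x /\ g (mdist X x y) = y /\
    forall s t, 0 <= s <= mdist X x y -> 0 <= t <= mdist X x y ->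
      mdist X (g s) (g t) = Rabs (s - t).

Definition hyperbolic (delta : R) : Prop :=
  forall x y z t : X,
    gromov x z t >= Rmin (gromov x y t) (gromov y z t) - delta.
End Geom.

Section Act.
Variables (G : Group) (X : MetricSpace).

Definition isometric_action (act : G -> X -> X) : Prop :=
  (forall x, act (gone G) x = x) /\
  (forall g h x, act (gmul G g h) x = act g (act h x)) /\
  (forall g x y, mdist X (act g x) (act g y) = mdist X x y).

(** Letters of the alphabet U ⊔ U^{-1} (U a finite subset given by a list). *)
Definition letter (U : list G) (a : G) : Prop := In a U \/ In (ginv G a) U.

Definition alpha_reduced (act : G -> X -> X) (delta alpha : R)
    (U : list G) (p : X) : Prop :=
  (forall u, In u U -> ~ In (ginv G u) U) /\
  (forall u1 u2, letter U u1 -> letter U u2 -> u1 <> u2 ->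
     gromov X (act u1 p) (act u2 p) p <
       Rmin (mdist X (act u1 p) p) (mdist X (act u2 p) p) / 2
       - alpha - 50 * delta).

Definition word_eval (w : list G) : G := fold_right (gmul G) (gone G) w.

Definition reduced_word (U : list G) (w : list G) : Prop :=
  Forall (letter U) w /\
  (forall i, (S i < length w)%nat ->
     nth (S i) w (gone G) <> ginv G (nth i w (gone G))).

Definition orbit_pt (act : G -> X -> X) (w : list G) (p : X) (i : nat) : X :=
  act (word_eval (firstn i w)) p.

(** u_i, 1-indexed. *)
Definition letter_at (w : list G) (i : nat) : G := nth (i - 1) w (gone G).
End Act.

From Pilot Require Import Defs.
From Stdlib Require Import Reals List Lra Lia.
Import ListNotations.
Open Scope R_scope.

(* The orbit points x_0, ..., x_n form a chain whose consecutive Gromov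
   products (x_{i-1}, x_{i+1})_{x_i} = (u_i^{-1} p, u_{i+1} p)_p are, by
   reducedness, smaller than half of both adjacent steps minus
   K = alpha + 50 delta.  For such a chain an induction along the chain,
   using the four-point condition once per step, shows that the Gromov
   product of x_0 and x_{j+1} seen from x_j exceeds the local one by at most
   delta; this yields the linear lower bound on |x_0 - x_n|, and, applied
   to the chain read backwards, the bound on (x_0, x_n)_{x_i}. *)

Section Gromov.
Variable X : MetricSpace.

Lemma gromov_sym (a b c : X) : gromov X a b c = gromov X b a c.
Proof. unfold gromov. rewrite (Defs.dist_sym X a b). lra. Qed.

Lemma gromov_add_swap (a b c : X) : gromov X a b c + gromov X a c b = mdist X b c.
Proof. unfold gromov. rewrite (Defs.dist_sym X c b). lra. Qed.

Lemma hyperbolic_delta_ge0 (delta : R) (x : X) : hyperbolic X delta -> 0 <= delta.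
Proof.
  intros hypX. specialize (hypX x x x x).
  unfold gromov, Rmin in hypX. rewrite Defs.dist_refl in hypX.
  destruct (Rle_dec _ _); lra.
Qed.

Lemma hyperbolic_gromov_le (delta : R) (x y z t : X) : hyperbolic X delta ->
  gromov X x z t + delta < gromov X x y t -> gromov X y z t <= gromov X x z t + delta.
Proof.
  intros hypX H. specialize (hypX x y z t). unfold Rmin in hypX.
  destruct (Rle_dec (gromov X x y t) (gromov X y z t)); lra.
Qed.

End Gromov.

Section Chain.
Variables (X : MetricSpace) (delta K : R).

Definition edge (y : nat -> X) (i : nat) : R := mdist X (y i) (y (S i)).

Definition corner (y : nat -> X) (i : nat) : R := gromov X (y i) (y (S (S i))) (y (S i)).

Definition K_chain (y : nat -> X) (m : nat) : Prop :=
  forall i, (i + 2 <= m)%nat -> corner y i < Rmin (edge y i) (edge y (S i)) / 2 - K.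

Hypothesis hypX : hyperbolic X delta.
Hypothesis HK : 3 * delta <= 2 * K.

Section FixedChain.
Variables (y : nat -> X) (m : nat).
Hypothesis chain_y : K_chain y m.

Lemma K_chain_corner_l i : (i + 2 <= m)%nat -> corner y i < edge y i / 2 - K.
Proof.
  intros Hi. specialize (chain_y i Hi).
  pose proof (Rmin_l (edge y i) (edge y (S i))). lra.
Qed.

Lemma K_chain_corner_r i : (i + 2 <= m)%nat -> corner y i < edge y (S i) / 2 - K.
Proof.
  intros Hi. specialize (chain_y i Hi).
  pose proof (Rmin_r (edge y i) (edge y (S i))). lra.
Qed.

Lemma K_chain_corner_add i : (i + 3 <= m)%nat ->
  corner y i + corner y (S i) < edge y (S i) - 2 * K.
Proof.
  intros Hi. pose proof (K_chain_corner_r i ltac:(lia)).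
  pose proof (K_chain_corner_l (S i) ltac:(lia)). lra.
Qed.

Lemma K_chain_rev : K_chain (fun t => y (m - t)%nat) m.
Proof.
  intros j Hj. set (k := (m - S (S j))%nat).
  specialize (chain_y k ltac:(lia)). unfold corner, edge in *.
  replace (m - j)%nat with (S (S k)) by lia.
  replace (m - S j)%nat with (S k) by lia.
  replace (m - S (S j))%nat with k by lia.
  rewrite gromov_sym, (Defs.dist_sym X (y (S (S k))) (y (S k))),
    (Defs.dist_sym X (y (S k)) (y k)), Rmin_comm.
  exact chain_y.
Qed.

(* The error does not accumulate: seen from [y (S (S j))], the point [y 0]
   lies almost in the direction of [y (S j)], so the four-point condition
   transfers the bound to the next corner at the cost of a single [delta]. *)
Lemma K_chain_gromov_origin j : (j + 2 <= m)%nat ->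
  gromov X (y 0%nat) (y (S (S j))) (y (S j)) <= corner y j + delta.
Proof.
  pose proof (hyperbolic_delta_ge0 X delta (y 0%nat) hypX).
  induction j as [|j IH]; intros Hj; [unfold corner; lra|].
  specialize (IH ltac:(lia)).
  pose proof (K_chain_corner_l (S j) Hj).
  pose proof (K_chain_corner_r j ltac:(lia)).
  pose proof (gromov_add_swap X (y 0%nat) (y (S j)) (y (S (S j)))) as Hswap.
  rewrite (gromov_sym X (y 0%nat) (y (S j))) in Hswap.
  apply (hyperbolic_gromov_le X delta (y (S j))); [exact hypX|].
  unfold corner, edge in *. lra.
Qed.

Lemma K_chain_dist_lower j : (S j <= m)%nat ->
  mdist X (y 0%nat) (y (S j)) >= edge y 0 / 2 + edge y j / 2 + 2 * INR j * (K - delta).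
Proof.
  induction j as [|j IH]; intros Hj; [unfold edge; simpl; lra|].
  specialize (IH ltac:(lia)).
  pose proof (K_chain_gromov_origin j ltac:(lia)).
  pose proof (K_chain_corner_l j ltac:(lia)).
  pose proof (K_chain_corner_r j ltac:(lia)).
  rewrite S_INR. unfold corner, edge, gromov in *.
  rewrite (Defs.dist_sym X (y (S (S j))) (y (S j))) in *. lra.
Qed.

End FixedChain.

Lemma K_chain_gromov_end (y : nat -> X) (m : nat) : K_chain y m ->
  forall j, (j + 2 <= m)%nat -> gromov X (y m) (y j) (y (S j)) <= corner y j + delta.
Proof.
  intros chain_y j Hj.
  pose proof (K_chain_gromov_origin _ _ (K_chain_rev y m chain_y) (m - S (S j))
    ltac:(lia)) as H.
  unfold corner in *.
  replace (m - 0)%nat with m in H by lia.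
  replace (m - S (S (m - S (S j))))%nat with j in H by lia.
  replace (m - S (m - S (S j)))%nat with (S j) in H by lia.
  replace (m - (m - S (S j)))%nat with (S (S j)) in H by lia.
  rewrite (gromov_sym X (y (S (S j)))) in H. exact H.
Qed.

Lemma K_chain_gromov_endpoints (y : nat -> X) (m : nat) : K_chain y m ->
  forall j, (j + 3 <= m)%nat -> gromov X (y 0%nat) (y m) (y (S j)) <= corner y j + 2 * delta.
Proof.
  intros chain_y j Hj.
  pose proof (K_chain_gromov_origin y m chain_y j ltac:(lia)).
  pose proof (K_chain_gromov_end y m chain_y (S j) ltac:(lia)).
  pose proof (K_chain_corner_r y m chain_y j ltac:(lia)).
  pose proof (K_chain_corner_l y m chain_y (S j) ltac:(lia)).
  pose proof (gromov_add_swap X (y m) (y (S (S j))) (y (S j))) as Hswap.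
  pose proof (hypX (y 0%nat) (y m) (y (S (S j))) (y (S j))) as Hfour.
  unfold corner, edge, Rmin in *.
  rewrite (Defs.dist_sym X (y (S (S j))) (y (S j))) in Hswap.
  destruct (Rle_dec _ _); lra.
Qed.

End Chain.

Section Words.
Variable G : Group.

Lemma ginv_involutive (a : G) : ginv G (ginv G a) = a.
Proof.
  rewrite <- (gmul_1r G (ginv G (ginv G a))), <- (gmul_Vl G a).
  rewrite gmul_assoc, gmul_Vl, gmul_1l. reflexivity.
Qed.

Lemma letter_ginv (U : list G) (a : G) : letter G U a -> letter G U (ginv G a).
Proof. unfold letter. rewrite ginv_involutive. tauto. Qed.

Lemma word_eval_app (w1 w2 : list G) :
  word_eval G (w1 ++ w2) = gmul G (word_eval G w1) (word_eval G w2).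
Proof.
  induction w1 as [|a w1 IH]; simpl.
  - rewrite gmul_1l. reflexivity.
  - rewrite IH, gmul_assoc. reflexivity.
Qed.

Lemma firstn_S_app_nth {A : Type} (w : list A) (d : A) i : (i < length w)%nat ->
  firstn (S i) w = firstn i w ++ [nth i w d].
Proof.
  revert i. induction w as [|a w IH]; intros [|i] Hi; simpl in *; try lia; [reflexivity|].
  rewrite <- (IH i) by lia. reflexivity.
Qed.

Lemma word_eval_firstn_S (w : list G) i : (i < length w)%nat ->
  word_eval G (firstn (S i) w) = gmul G (word_eval G (firstn i w)) (nth i w (gone G)).
Proof.
  intros Hi. rewrite (firstn_S_app_nth w (gone G) i Hi), word_eval_app. simpl.
  rewrite gmul_1r. reflexivity.
Qed.

End Words.

Section Orbit.
Variables (G : Group) (X : MetricSpace) (act : G -> X -> X).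
Hypothesis act_one : forall x, act (gone G) x = x.
Hypothesis act_mul : forall g h x, act (gmul G g h) x = act g (act h x).
Hypothesis act_iso : forall g x y, mdist X (act g x) (act g y) = mdist X x y.

Lemma gromov_act g (a b c : X) : gromov X (act g a) (act g b) (act g c) = gromov X a b c.
Proof. unfold gromov. rewrite !act_iso. reflexivity. Qed.

Lemma dist_act_ginv g (p : X) : mdist X (act (ginv G g) p) p = mdist X (act g p) p.
Proof.
  rewrite <- (act_iso g), <- act_mul, gmul_Vr, act_one. apply Defs.dist_sym.
Qed.

Variables (w : list G) (p : X).

Lemma orbit_pt_0 : orbit_pt G X act w p 0 = p.
Proof. apply act_one. Qed.

Lemma orbit_pt_length : orbit_pt G X act w p (length w) = act (word_eval G w) p.
Proof. unfold orbit_pt. rewrite firstn_all. reflexivity. Qed.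

Lemma orbit_pt_S i : (i < length w)%nat ->
  orbit_pt G X act w p (S i)
  = act (word_eval G (firstn i w)) (act (nth i w (gone G)) p).
Proof. intros Hi. unfold orbit_pt. rewrite word_eval_firstn_S, act_mul by exact Hi. reflexivity. Qed.

Lemma orbit_edge i : (i < length w)%nat ->
  edge X (orbit_pt G X act w p) i = mdist X (act (nth i w (gone G)) p) p.
Proof.
  intros Hi. unfold edge. rewrite orbit_pt_S by exact Hi. unfold orbit_pt.
  rewrite act_iso. apply Defs.dist_sym.
Qed.

Lemma orbit_corner i : (i + 2 <= length w)%nat ->
  corner X (orbit_pt G X act w p) i
  = gromov X (act (ginv G (nth i w (gone G))) p) (act (nth (S i) w (gone G)) p) p.
Proof.
  intros Hi. unfold corner.
  rewrite !orbit_pt_S, word_eval_firstn_S by lia. unfold orbit_pt.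
  set (h := word_eval G (firstn i w)). set (a := nth i w (gone G)).
  rewrite <- (gromov_act (gmul G h a) (act (ginv G a) p)), !act_mul.
  rewrite <- (act_mul a (ginv G a)), gmul_Vr, act_one. reflexivity.
Qed.

Lemma orbit_K_chain (U : list G) (delta alpha : R) :
  alpha_reduced G X act delta alpha U p -> reduced_word G U w ->
  K_chain X (alpha + 50 * delta) (orbit_pt G X act w p) (length w).
Proof.
  intros [_ Hsmall] [Hletters Hnocancel] i Hi.
  assert (Hletter : forall j, (j < length w)%nat -> letter G U (nth j w (gone G)))
    by (intros j Hj; eapply Forall_forall; [exact Hletters | apply nth_In; exact Hj]).
  rewrite orbit_corner, !orbit_edge, <- (dist_act_ginv (nth i w (gone G))) by lia.
  enough (gromov X (act (ginv G (nth i w (gone G))) p) (act (nth (S i) w (gone G)) p) p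
    < Rmin (mdist X (act (ginv G (nth i w (gone G))) p) p)
           (mdist X (act (nth (S i) w (gone G)) p) p) / 2 - alpha - 50 * delta) by lra.
  apply Hsmall.
  - apply letter_ginv, Hletter. lia.
  - apply Hletter. lia.
  - intros E. apply (Hnocancel i); [lia | symmetry; exact E].
Qed.

End Orbit.

Theorem mainTheorem9 (G : Group) (X : MetricSpace) (act : G -> X -> X)
  (delta alpha : R) (U : list G) (p : X) (w : list G) :
  isometric_action G X act ->
  geodesic_space X ->
  0 <= delta ->
  hyperbolic X delta ->
  alpha >= 3 * delta ->
  alpha_reduced G X act delta alpha U p ->
  (2 <= length w)%nat ->
  reduced_word G U w ->
  let n := length w in
  let x := orbit_pt G X act w p in
  let u := letter_at G w in
  (* (i) *)
  (forall i, (1 <= i <= n - 2)%nat ->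
     gromov X (x (i - 1)%nat) (x (i + 1)%nat) (x i)
     + gromov X (x i) (x (i + 2)%nat) (x (i + 1)%nat)
     < mdist X (x i) (x (i + 1)%nat) - 2 * (alpha + 50 * delta)) /\
  (* (ii) *)
  mdist X (act (word_eval G w) p) p >=
    / 2 * mdist X (act (u 1%nat) p) p + / 2 * mdist X (act (u n) p) p
    + 2 * INR (n - 1) * (alpha + 40 * delta) + 4 * INR (n - 1) * delta /\
  (* (iii) *)
  (forall i, (1 <= i <= n - 2)%nat ->
     gromov X p (act (word_eval G w) p) (x i) <=
     gromov X (act (ginv G (u i)) p) (act (u (i + 1)%nat) p) p + 2 * delta).
Proof.
  intros [act_one [act_mul act_iso]] _ Hdelta hypX Halpha Hred Hn Hw n x u.
  subst n x u.
  pose proof (orbit_K_chain G X act act_one act_mul act_iso w p U delta alpha Hred Hw)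
    as chain_x.
  assert (HK : 3 * delta <= 2 * (alpha + 50 * delta)) by lra.
  split; [|split].
  - intros [|j] Hj; [lia|].
    pose proof (K_chain_corner_add X _ _ _ chain_x j ltac:(lia)) as H.
    unfold corner, edge in H.
    replace (S j - 1)%nat with j by lia.
    replace (S j + 1)%nat with (S (S j)) by lia.
    replace (S j + 2)%nat with (S (S (S j))) by lia.
    exact H.
  - pose proof (K_chain_dist_lower X delta _ hypX HK _ _ chain_x (length w - 1) ltac:(lia)) as H.
    replace (S (length w - 1)) with (length w) in H by lia.
    rewrite orbit_pt_0, orbit_pt_length, !orbit_edge, Defs.dist_sym in H
      by (assumption || lia).
    pose proof (Rmult_le_pos _ _ (pos_INR (length w - 1)) Hdelta).
    unfold letter_at. simpl (1 - 1)%nat. lra.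
  - intros [|j] Hj; [lia|].
    pose proof (K_chain_gromov_endpoints X delta _ hypX HK _ _ chain_x j ltac:(lia)) as H.
    rewrite orbit_pt_0, orbit_pt_length, orbit_corner in H
      by (assumption || lia).
    unfold letter_at.
    replace (S j - 1)%nat with j by lia.
    replace (S j + 1 - 1)%nat with (S j) by lia.
    exact H.
Qed.
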